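(* Let $\mathcal C\subseteq 2^{[n]}$ be a stable hyperplane code. Then $\mathcal C$ has no strong bitflip local obstructions; that is, there is no pair $(g,\tau)$ with $g\in(\mathbb Z_2)^n$ and $\tau\subseteq[n]$ such that $\tau\notin g\cdot\mathcal C$ and $\operatorname{link}_\tau\Delta(g\cdot\mathcal C)$ is not collapsible.
   Context: A code is a subset $\mathcal C\subseteq 2^{[n]}$, $[n]=\{1,\dots,n\}$. An oriented affine hyperplane in $\mathbb R^d$ is $H=\{x: w\cdot x-h=0\}$ with $w\in\mathbb R^d\setminus\{0\}$, $h\in\mathbb R$, and open half-spaces $H^+=\{x:w\cdot x-h>0\}$, $H^-=\{x:w\cdot x-h<0\}$. For hyperplanes $\mathcal H=\{H_1,\dots,H_n\}$ in $\mathbb R^d$ and an open convex set $X\subseteq\mathbb R^d$, the atom of $\sigma\subseteq[n]$ is $A_\sigma=\bigl(\bigcap_{i\in\sigma}(H_i^+\cap X)\bigr)\setminus\bigcup_{j\notin\sigma}H_j^+$ (for $\sigma=\emptyset$, $A_\emptyset=X\setminus\bigcup_{i}H_i^+$), and $\mathrm{code}(\mathcal H,X)=\{\sigma\subseteq[n]:A_\sigma\neq\emptyset\}$. The pair $(\mathcal H,X)$ is stable if $X$ is open and convex and for every $\sigma\subseteq[n]$ with $X\cap\bigcap_{i\in\sigma}H_i\neq\emptyset$, the affine subspace $\bigcap_{i\in\sigma}H_i$ has dimension $d-|\sigma|$. A stable hyperplane code is a code equal to $\mathrm{code}(\mathcal H,X)$ for some stable pair. The group $(\mathbb Z_2)^n$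 acts on $2^{[n]}$ by letting the generator $e_i$ send $\sigma$ to $\sigma\cup\{i\}$ if $i\notin\sigma$ and to $\sigma\setminus\{i\}$ if $i\in\sigma$; $g\cdot\mathcal C=\{g\cdot\sigma:\sigma\in\mathcal C\}$. $\Delta(\mathcal C)=\{\tau:\tau\subseteq\sigma\text{ for some }\sigma\in\mathcal C\}$. For a simplicial complex $\Delta$ and $\tau\subseteq$ its vertex set, $\operatorname{link}_\tau\Delta=\{\nu\in\Delta:\nu\cap\tau=\emptyset,\ \nu\cup\tau\in\Delta\}$ (the void complex $\{\}$ if $\tau\notin\Delta$). A free pair in $\Delta$ is $(\sigma,\tau)$ with $\tau$ a facet, $\sigma\subsetneq\tau$, and $\sigma$ contained in no other facet; the collapse along $\sigma$ replaces $\Delta$ by $\{\nu\in\Delta:\nu\not\supseteq\sigma\}$. $\Delta$ is collapsible if a finite sequence of collapses yields the void complex $\{\}$ (with no faces); in particular $\{\}$ is collapsible while $\{\emptyset\}$ is not. *)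

From HB Require Import structures.
From mathcomp Require Import all_boot all_order all_algebra.
From mathcomp Require Import all_classical all_reals all_analysis.
From mathcomp Require Import Rstruct Rstruct_topology.
Set Implicit Arguments. Unset Strict Implicit. Unset Printing Implicit Defensive.
Import Order.TTheory GRing.Theory Num.Theory numFieldNormedType.Exports.
Local Open Scope ring_scope.
Local Open Scope classical_set_scope.

Definition dotv (R : realType) (d : nat) (w x : 'rV[R]_d) : R :=
  \sum_(k < d) w 0 k * x 0 k.

Record hyperplane (R : realType) (d : nat) := Hyperplane {
  hp_w : 'rV[R]_d;
  hp_h : R;
  hp_w_neq0 : hp_w != 0 }.

Definition hp_set (R : realType) (d : nat) (H : hyperplane R d) : set 'rV[R]_d :=
  [set x | dotv (hp_w H) x - hp_h H = 0].
Definition hp_pos (R : realType) (d : nat) (H : hyperplane R d) : set 'rV[R]_d :=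
  [set x | dotv (hp_w H) x - hp_h H > 0].

Definition convex_open (R : realType) (d : nat) (X : set 'rV[R]_d) : Prop :=
  open X /\
  (forall x y t, X x -> X y -> 0 <= t -> t <= 1 -> X ((1 - t) *: x + t *: y)).

(* Dimension of the affine hull of a nonempty set S is k: there are k+1
   affinely independent points of S, and never more. *)
Definition affine_dim (R : realType) (d : nat) (S : set 'rV[R]_d) (k : nat) : Prop :=
  (exists (p : 'rV[R]_d) (M : 'M[R]_(k, d)),
      S p /\ row_free M /\ forall j, S (p + row j M)) /\
  (forall (m : nat) (p : 'rV[R]_d) (M : 'M[R]_(m, d)),
      S p -> row_free M -> (forall j, S (p + row j M)) -> (m <= k)%N).

Definition atom (R : realType) (d n : nat) (H : 'I_n -> hyperplane R d)
  (X : set 'rV[R]_d) (s : {set 'I_n}) : set 'rV[R]_d :=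
  [set x | X x /\ (forall i, i \in s -> hp_pos (H i) x)
               /\ (forall j, j \notin s -> ~ hp_pos (H j) x)].

Definition is_code_of (R : realType) (d n : nat) (H : 'I_n -> hyperplane R d)
  (X : set 'rV[R]_d) (C : {set {set 'I_n}}) : Prop :=
  forall s, s \in C <-> atom H X s !=set0.

Definition stable_pair (R : realType) (d n : nat) (H : 'I_n -> hyperplane R d)
  (X : set 'rV[R]_d) : Prop :=
  convex_open X /\
  forall s : {set 'I_n},
    let I := [set x | forall i, i \in s -> hp_set (H i) x] in
    X `&` I !=set0 -> affine_dim I (d - #|s|)%N /\ (#|s| <= d)%N.

Definition stable_hyperplane_code (n : nat) (C : {set {set 'I_n}}) : Prop :=
  exists (d : nat) (H : 'I_n -> hyperplane Rdefinitions.R d)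
         (X : set 'rV[Rdefinitions.R]_d),
    stable_pair H X /\ is_code_of H X C.

Local Close Scope classical_set_scope.
(* The group (Z_2)^n is represented by subsets g of [n] (g = sum of e_i, i in g);
   its action on a codeword is the symmetric difference. *)
Definition flip (n : nat) (g s : {set 'I_n}) : {set 'I_n} :=
  (s :\: g) :|: (g :\: s).
Definition flip_code (n : nat) (g : {set 'I_n}) (C : {set {set 'I_n}}) :=
  [set flip g s | s in C].

Definition Delta (n : nat) (C : {set {set 'I_n}}) : {set {set 'I_n}} :=
  [set t : {set 'I_n} | [exists s in C, t \subset s]].

Definition link (n : nat) (t : {set 'I_n}) (D : {set {set 'I_n}}) :=
  [set v in D | [disjoint v & t] && ((v :|: t) \in D)].

Definition facet (n : nat) (D : {set {set 'I_n}}) (t : {set 'I_n}) : bool :=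
  (t \in D) && [forall v in D, ~~ (t \proper v)].

Definition free_pair (n : nat) (D : {set {set 'I_n}}) (s t : {set 'I_n}) : bool :=
  [&& facet D t, s \proper t &
      [forall u, (facet D u && (s \subset u)) ==> (u == t)]].

Definition collapse (n : nat) (D : {set {set 'I_n}}) (s : {set 'I_n}) :=
  [set v in D | ~~ (s \subset v)].

Inductive collapsible (n : nat) : {set {set 'I_n}} -> Prop :=
| collapsible_void : collapsible (finset.set0 : {set {set 'I_n}})
| collapsible_step D s t :
    free_pair D s t -> collapsible (collapse D s) -> collapsible D.

From mathcomp Require Import all_boot all_order all_algebra.
From mathcomp Require Import all_classical all_reals all_analysis.
From mathcomp Require Import ring lra zify.
Set Implicit Arguments. Unset Strict Implicit. Unset Printing Implicit Defensive.
(* Shadow the homonymous classical-set names ([set0], [subsetP], ...). *)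
Import mathcomp.boot.fintype mathcomp.boot.finset.
Import Order.TTheory GRing.Theory Num.Theory numFieldNormedType.Exports.

(* Reversing the orientation of H_i for i in g turns g.C into the code of the
   flipped arrangement, with affine forms F_i = (-1)^[i in g] (w_i.x - h_i).
   Let Y be the convex set of points of X where F_i > 0 for every i in tau.
   Thanks to stability, every point of X can be pushed off the hyperplanes
   through it in any prescribed directions; hence the link of tau in
   Delta(g.C) is the nerve of the open half-spaces {F_i > 0}, i notin tau,
   restricted to Y, and these half-spaces cover Y because tau notin g.C.
   Such a nerve is collapsible, by induction on the number of half-spaces:
   if one of them is covered by the others inside Y, the nerve is its
   deletion plus a cone over a nerve of the same kind on Y /\ {F_j > 0}, and
   collapsing the link part first collapses the whole; otherwise each
   half-space has a private point, and restricting to F_p = 0 for one p shows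
   that all the half-spaces meet, so the nerve is a simplex. *)

Section Collapsibility.
Variable n : nat.
Implicit Types (E L : {set {set 'I_n}}) (s t u v w S : {set 'I_n}) (j : 'I_n).

Definition vjoin j L := [set j |: v | v in L].

Section JoinVertex.
Variable j : 'I_n.

Lemma setU1_subset u v : j \notin u -> j \notin v -> (j |: u \subset j |: v) = (u \subset v).
Proof.
move=> ju jv; apply/idP/idP => [/(setSD [set j])|/(setUS [set j])//].
by rewrite !setU1K.
Qed.

Lemma setU1_eq u v : j \notin u -> j \notin v -> (j |: u == j |: v) = (u == v).
Proof.
by move=> ju jv; apply/eqP/eqP => [/(congr1 (fun A => A :\ j))|->]; rewrite ?setU1K.
Qed.

Lemma setU1_proper u v : j \notin u -> j \notin v -> (j |: u \proper j |: v) = (u \proper v).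
Proof. by move=> ju jv; rewrite !properEneq setU1_subset // setU1_eq. Qed.

Lemma mem_vjoin L u : {in L, forall v, j \notin v} -> j \notin u ->
  (j |: u \in vjoin j L) = (u \in L).
Proof.
move=> jL ju; apply/imsetP/idP => [[v vL /eqP]|uL]; last by exists u.
by rewrite (setU1_eq ju (jL v vL)) => /eqP->.
Qed.

Variables E L : {set {set 'I_n}}.
Hypotheses (jE : {in E, forall v, j \notin v}) (jL : {in L, forall v, j \notin v}).

Variant vjoinU_spec w : Prop :=
  | VjoinUBase of w \in E & j \notin w
  | VjoinUTop u of u \in L & w = j |: u.

Lemma vjoinUP w : w \in E :|: vjoin j L -> vjoinU_spec w.
Proof.
case/setUP => [wE|/imsetP[u uL ->]]; [exact: VjoinUBase (jE wE)|exact: VjoinUTop uL _].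
Qed.

Lemma facet_vjoinU u : j \notin u -> facet (E :|: vjoin j L) (j |: u) = facet L u.
Proof.
move=> ju; have jEu : j |: u \notin E by apply/negP => /jE; rewrite setU11.
rewrite /facet inE (negPf jEu) (mem_vjoin jL ju) /=; case: (u \in L) => //=.
apply/forallP/forallP => max v; apply/implyP => vD.
  have jv := jL vD; have := implyP (max (j |: v)).
  by rewrite inE (mem_vjoin jL jv) vD orbT (setU1_proper ju jv); apply.
case: (vjoinUP vD) => [_ jv|v' v'L ->].
  by apply: contra jv => /proper_sub/subsetP; apply; apply: setU11.
by rewrite (setU1_proper ju (jL v'L)); apply: (implyP (max v')).
Qed.

Lemma free_pair_vjoinU s t : free_pair L s t -> free_pair (E :|: vjoin j L) (j |: s) (j |: t).
Proof.
case/and3P=> tfacet st /forallP uniq_t.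
have jt : j \notin t by apply: jL; case/andP: tfacet.
have js : j \notin s := contra (subsetP (proper_sub st) j) jt.
apply/and3P; split; [by rewrite facet_vjoinU|by rewrite setU1_proper|].
apply/forallP => w; apply/implyP => /andP[wfacet sw].
case: (vjoinUP (proj1 (andP wfacet))) => [_ jw|u uL wu].
  by move: jw; rewrite (subsetP sw) ?setU11.
have ju := jL uL.
move: wfacet sw; rewrite wu facet_vjoinU // setU1_subset // setU1_eq // => uf su.
exact: (implyP (uniq_t u) (introT andP (conj uf su))).
Qed.

Lemma collapse_vjoinU s : j \notin s ->
  collapse (E :|: vjoin j L) (j |: s) = E :|: vjoin j (collapse L s).
Proof.
move=> js; have jcL : {in collapse L s, forall v, j \notin v}.
  by move=> v; rewrite inE => /andP[/jL].
apply/setP => w; rewrite inE.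
have [wD|wD] := boolP (w \in E :|: vjoin j L); rewrite ?andbT ?andbF; last first.
  apply/esym; move: wD; apply: contraNF; rewrite !inE => /orP[->//|/imsetP[u]].
  by rewrite inE => /andP[uL _] ->; rewrite (mem_vjoin jL (jL uL)) uL orbT.
case: (vjoinUP wD) => [wE jw|u uL ->]; rewrite inE.
  by rewrite wE; apply: contra jw => /subsetP; apply; apply: setU11.
have /negPf-> : j |: u \notin E by apply/negP => /jE; rewrite setU11.
have ju := jL uL.
by rewrite /= setU1_subset // (mem_vjoin jcL ju) inE uL.
Qed.

End JoinVertex.

(* [E] is the deletion and [L] the link of [j] in [E :|: vjoin j L]; the
   collapses of [L], coned off by [j], are performed first. *)
Lemma collapsibleU_vjoin j E L :
  {in E, forall v, j \notin v} -> {in L, forall v, j \notin v} ->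
  collapsible E -> collapsible L -> collapsible (E :|: vjoin j L).
Proof.
move=> jE + cE cL; elim: cL => [_|{}L s t st _ IH jL].
  by rewrite /vjoin imset0 setU0.
have js : j \notin s.
  by case/and3P: st => /andP[/jL jt _] /proper_sub/subsetP/(_ j)/contra/(_ jt).
apply: (collapsible_step (free_pair_vjoinU jE jL st)).
by rewrite collapse_vjoinU //; apply: IH => v; rewrite inE => /andP[/jL].
Qed.

(* A collapse along the empty face removes the whole simplex at once. *)
Lemma collapsible_powerset S : S != set0 -> collapsible (powerset S).
Proof.
move=> S0; apply: (@collapsible_step _ _ set0 S); last first.
  suff -> : collapse (powerset S) set0 = set0 by constructor.
  by apply/setP => v; rewrite !inE sub0set andbF.
have facetS : facet (powerset S) S.
  rewrite /facet powersetE subxx; apply/forallP => v; apply/implyP.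
  by rewrite powersetE => vS; apply/negP => /proper_subn; rewrite vS.
apply/and3P; split => //; first by rewrite properEneq eq_sym S0 sub0set.
apply/forallP => u; apply/implyP => /andP[/andP[]]; rewrite powersetE => uS /forallP.
move=> /(_ S)/implyP; rewrite powersetE subxx properEneq uS andbT => /(_ isT).
by rewrite negbK eq_sym.
Qed.

End Collapsibility.

Local Open Scope ring_scope.

Section ConvexCovers.
Local Open Scope classical_set_scope.
Variables (R : realFieldType) (V : lmodType R).

Definition convex (Y : set V) := forall x y (t : R),
  Y x -> Y y -> 0 <= t -> t <= 1 -> Y ((1 - t) *: x + t *: y).

Definition affine (f : V -> R) := forall x y (t : R),
  f ((1 - t) *: x + t *: y) = (1 - t) * f x + t * f y.

Lemma convexI (Y Z : set V) : convex Y -> convex Z -> convex (Y `&` Z).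
Proof. by move=> cY cZ x y t [Yx Zx] [Yy Zy] t0 t1; split; [apply: cY|apply: cZ]. Qed.

Lemma exists_small_pos (I : finType) (S : {set I}) (a c : I -> R) :
  (forall i, i \in S -> 0 < a i) -> (forall i, i \in S -> 0 <= c i) ->
  exists e : R, [/\ 0 < e, e <= 1 & forall i, i \in S -> e * c i < a i].
Proof.
move=> a_gt0 c_ge0; pose T := \sum_(i in S) c i / a i.
have ca_ge0 i : i \in S -> 0 <= c i / a i.
  by move=> iS; rewrite divr_ge0 ?c_ge0 ?ltW ?a_gt0.
have T_ge0 : 0 <= T by apply: sumr_ge0.
exists (1 + T)^-1; split; [by rewrite invr_gt0; lra|by rewrite invf_le1; lra|].
move=> i iS; have ai := a_gt0 i iS.
have : c i / a i <= T by rewrite /T (bigD1 i) //= lerDl sumr_ge0 // => k /andP[/ca_ge0].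
rewrite ler_pdivrMr // ltr_pdivrMl ?invr_gt0 ?invrK; last lra.
nra.
Qed.

Variables (I : finType) (F : I -> V -> R).
Hypothesis F_affine : forall i, affine (F i).

Lemma convex_pos j : convex [set x | 0 < F j x].
Proof.
move=> x y t /= Fx Fy t0 t1; rewrite F_affine.
have [->|t_gt0] := eqVneq t 0; first by rewrite subr0 mul1r mul0r addr0.
have : 0 < t by rewrite lt0r t_gt0.
nra.
Qed.

Lemma convex_zero j : convex [set x | F j x = 0].
Proof. by move=> x y t /= Fx Fy _ _; rewrite F_affine Fx Fy !mulr0 addr0. Qed.

Definition covers (S : {set I}) (Y : set V) :=
  forall y, Y y -> exists2 i, i \in S & 0 < F i y.

Definition private_point (S : {set I}) (Y : set V) j x :=
  [/\ Y x, 0 < F j x & forall i, i \in S -> i != j -> F i x <= 0].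

Lemma private_point_of_not_covers S Y j :
  ~ covers (S :\ j) (Y `&` [set y | 0 < F j y]) -> exists x, private_point S Y j x.
Proof.
move=> /existsNP[x /not_implyP[[Yx Fjx] nocov]]; exists x; split => // i iS ij.
by rewrite leNgt; apply/negP => Fix; apply: nocov; exists i; rewrite // !inE ij.
Qed.

(* The point of the segment [xj, xp] where [F p] vanishes. *)
Lemma private_point_on_zero S Y p j xp xj :
  convex Y -> covers S Y -> p \in S -> j \in S -> j != p ->
  private_point S Y p xp -> private_point S Y j xj ->
  exists x, private_point (S :\ p) (Y `&` [set x | F p x = 0]) j x.
Proof.
move=> cY covY pS jS jp [Yxp Fpxp xp_priv] [Yxj Fjxj xj_priv].
have Fpxj : F p xj <= 0 by apply: xj_priv; rewrite // eq_sym.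
pose s := F p xj / (F p xj - F p xp).
have s_def : s * (F p xj - F p xp) = F p xj by rewrite mulfVK //; apply/negP => /eqP; lra.
have s_ge0 : 0 <= s by nra.
have s_le1 : s <= 1 by nra.
pose x := (1 - s) *: xj + s *: xp.
have Yx : Y x by apply: cY.
have Fpx : F p x = 0 by rewrite F_affine; nra.
have Fix i : i \in S -> i != p -> i != j -> F i x <= 0.
  move=> iS ip ij; rewrite F_affine.
  have := xj_priv i iS ij; have := xp_priv i iS ip; nra.
exists x; split => //; last by move=> i /setD1P[ip iS]; apply: Fix.
have [i iS Fi] := covY x Yx.
have [<-//|ij] := eqVneq i j.
have [ip|ip] := eqVneq i p; first by move: Fi; rewrite ip Fpx ltxx.
by have := Fix i iS ip ij; lra.
Qed.

(* By induction on [S]: a common point y0 of the [F i > 0], i <> p, on the zero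
   set of [F p] is pushed slightly towards the private point of [p]. *)
Lemma common_pos_point S Y : S != set0 -> convex Y -> covers S Y ->
  (forall j, j \in S -> exists x, private_point S Y j x) ->
  exists2 y, Y y & forall i, i \in S -> 0 < F i y.
Proof.
elim: {S}_.+1 {-2}S (ltnSn #|S|) Y => // k IH S; rewrite ltnS => leSk Y.
case/set0Pn=> p pS cY covY priv; have [xp [Yxp Fpxp xp_priv]] := priv p pS.
have [Sp0|Sp] := eqVneq (S :\ p) set0.
  exists xp => // i iS; have [->//|ip] := eqVneq i p.
  by have := in_set0 i; rewrite -Sp0 !inE ip iS.
pose Y0 := Y `&` [set x | F p x = 0].
have covY0 : covers (S :\ p) Y0.
  move=> y [Yy Fpy]; have [i iS Fi] := covY y Yy; exists i => //.
  by rewrite !inE iS andbT; apply: contraTneq Fi => ->; rewrite Fpy ltxx.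
have privY0 j : j \in S :\ p -> exists x, private_point (S :\ p) Y0 j x.
  case/setD1P=> jp jS; have [xj privj] := priv j jS.
  exact: (private_point_on_zero cY covY pS jS jp (And3 Yxp Fpxp xp_priv) privj).
have ltSp : (#|S :\ p| < k)%N by rewrite (cardsD1 p S) pS in leSk.
have [y0 [Yy0 Fpy0] Fy0] := IH _ ltSp Y0 Sp (convexI cY (@convex_zero p)) covY0 privY0.
have c_ge0 i : i \in S :\ p -> 0 <= F i y0 - F i xp.
  case/setD1P=> ip iS; have := xp_priv i iS ip; have := Fy0 i; rewrite !inE ip iS => /(_ isT).
  lra.
have [e [e_gt0 e_le1 small]] := exists_small_pos Fy0 c_ge0.
exists ((1 - e) *: y0 + e *: xp); first by apply: cY => //; lra.
move=> i iS; rewrite F_affine; have [->|ip] := eqVneq i p; first by rewrite Fpy0; nra.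
by have := small i; rewrite !inE ip iS => /(_ isT); lra.
Qed.

End ConvexCovers.

(* Since [convex] unfolds to a product, [j] would otherwise be implicit. *)
Arguments convex_pos {R V I F} F_affine j.

Section Nerve.
Local Open Scope classical_set_scope.
Variables (R : realFieldType) (V : lmodType R) (n : nat) (F : 'I_n -> V -> R).
Hypothesis F_affine : forall i, affine (F i).
Implicit Types (Y : set V) (S v : {set 'I_n}) (j : 'I_n).

Definition nerve Y S : {set {set 'I_n}} :=
  [set v : {set 'I_n} | (v \subset S) &&
     `[< exists2 y, Y y & forall i, i \in v -> 0 < F i y >]]%SET.

Lemma notin_nerveD1 Y S j : {in nerve Y (S :\ j), forall v, j \notin v}.
Proof.
by move=> v; rewrite inE => /andP[/subsetP vS _]; apply/negP => /vS; rewrite setD11.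
Qed.

Lemma nerve_split Y S j : j \in S ->
  nerve Y S = nerve Y (S :\ j) :|: vjoin j (nerve (Y `&` [set y | 0 < F j y]) (S :\ j)).
Proof.
move=> jS; apply/setP => w; rewrite !inE; apply/andP/idP.
  case=> wS /asboolP[y Yy Fw]; have [jw|jw] := boolP (j \in w).
    apply/orP; right; apply/imsetP; exists (w :\ j); last by rewrite setD1K.
    rewrite inE setSD //=; apply/asboolP; exists y; first by split => //; apply: Fw.
    by move=> i /setD1P[_ /Fw].
  by apply/orP; left; rewrite subsetD1 wS jw /=; apply/asboolP; exists y.
case/orP => [/andP[wS /asboolP[y Yy Fw]]|/imsetP[u]].
  by split; [exact: subset_trans wS (subsetDl _ _)|apply/asboolP; exists y].
rewrite inE => /andP[uS /asboolP[y [Yy Fjy] Fu]] ->; split.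
  by rewrite -(setD1K jS) setUS.
by apply/asboolP; exists y => // i /setU1P[->|/Fu].
Qed.

Lemma nerve_full Y S : (exists2 y, Y y & forall i, i \in S -> 0 < F i y) ->
  nerve Y S = powerset S.
Proof.
case=> y Yy Fy; apply/setP => v; rewrite !inE andb_idr // => vS.
by apply/asboolP; exists y => // i /(subsetP vS)/Fy.
Qed.

Lemma nerve_collapsible S Y : convex Y -> covers F S Y -> collapsible (nerve Y S).
Proof.
elim: {S}_.+1 {-2}S (ltnSn #|S|) Y => // k IH S; rewrite ltnS => leSk Y cY covY.
have [[j jS covj]|noredundant] :=
  pselect (exists2 j, j \in S & covers F (S :\ j) (Y `&` [set y | 0 < F j y])).
  have ltSj : (#|S :\ j| < k)%N by rewrite (cardsD1 j S) jS in leSk.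
  rewrite (nerve_split _ jS); apply: collapsibleU_vjoin; try exact: notin_nerveD1.
    apply: IH => // y Yy; have [i iS Fi] := covY y Yy.
    have [ij|ij] := eqVneq i j; last by exists i; rewrite // !inE ij.
    by apply: covj; split; rewrite -?ij.
  by apply: IH ltSj _ _ covj; apply: convexI cY (convex_pos F_affine j).
have [S0|SN0] := eqVneq S set0.
  suff -> : nerve Y S = set0 by constructor.
  apply/setP => v; rewrite !inE; apply/negbTE/nandP; right; apply/negP => /asboolP[y Yy _].
  by have [i] := covY y Yy; rewrite S0 inE.
have priv j : j \in S -> exists x, private_point F S Y j x.
  by move=> jS; apply: private_point_of_not_covers => covj; apply: noredundant; exists j.
rewrite nerve_full; first exact: collapsible_powerset SN0.
exact: (common_pos_point F_affine SN0 cY covY priv).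
Qed.

End Nerve.

Section Hyperplanes.
Variables (R : realType) (d : nat).
Implicit Types (w x y : 'rV[R]_d).

Definition hp_fun (H : hyperplane R d) x := dotv (hp_w H) x - hp_h H.

Lemma dotvDr w x y : dotv w (x + y) = dotv w x + dotv w y.
Proof. by rewrite /dotv -big_split; apply: eq_bigr => k _; rewrite mxE mulrDr. Qed.

Lemma dotvZr w x (a : R) : dotv w (a *: x) = a * dotv w x.
Proof. by rewrite /dotv mulr_sumr; apply: eq_bigr => k _; rewrite mxE mulrCA. Qed.

Lemma dotv_mulmx k (W : 'M[R]_(k, d)) x r : (x *m W^T) 0 r = dotv (row r W) x.
Proof. by rewrite !mxE; apply: eq_bigr => c _; rewrite !mxE mulrC. Qed.

Lemma hp_fun_affine H : affine (hp_fun H).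
Proof. by move=> x y t; rewrite /hp_fun !dotvDr !dotvZr; ring. Qed.

Lemma hp_fun_shift H x y (t : R) :
  hp_fun H (x + t *: y) = hp_fun H x + t * dotv (hp_w H) y.
Proof. by rewrite /hp_fun dotvDr dotvZr addrAC. Qed.

End Hyperplanes.

Section StablePerturbation.
Variables (R : realType) (d n : nat) (H : 'I_n -> hyperplane R d) (X : set 'rV[R]_d).
Hypothesis stHX : stable_pair H X.

Lemma active_normals_solvable x (e : 'I_n -> R) : X x ->
  exists u, forall i, hp_fun (H i) x = 0 -> dotv (hp_w (H i)) u = e i.
Proof.
move=> Xx; pose A := [set i | hp_fun (H i) x == 0]; pose k := #|A|.
pose W : 'M[R]_(k, d) := \matrix_(r, c) hp_w (H (enum_val r)) 0 c.
have rowW r : row r W = hp_w (H (enum_val r)) by apply/rowP => c; rewrite !mxE.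
have dotvW z i (iA : i \in A) : dotv (hp_w (H i)) z = (z *m W^T) 0 (enum_rank_in iA i).
  by rewrite dotv_mulmx rowW enum_rankK_in.
have [[_ maxdim] le_kd] : affine_dim [set z | forall i, i \in A -> hp_set (H i) z] (d - k)
    /\ (k <= d)%N.
  by apply: stHX.2; exists x; split => // i; rewrite inE => /eqP.
have kerW z : (z <= kermx W^T)%MS -> forall i, i \in A -> dotv (hp_w (H i)) z = 0.
  by move=> /sub_kermxP zW i iA; rewrite (dotvW _ _ iA) zW mxE.
have rank_ker : (\rank (kermx W^T) <= d - k)%N.
  apply: (maxdim _ x (row_base (kermx W^T)) _ (row_base_free _)).
    by move=> i; rewrite inE => /eqP.
  move=> j i iA; have rowj : (row j (row_base (kermx W^T)) <= kermx W^T)%MS.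
    by rewrite (submx_trans (row_sub j _)) // eq_row_base.
  by rewrite /hp_set /= dotvDr (kerW _ rowj) // addr0; move: iA; rewrite inE => /eqP.
have fullW : row_full W^T.
  by move: rank_ker; rewrite mxrank_ker /row_full => ?; have := rank_leq_col W^T; lia.
pose b : 'rV[R]_k := \row_r e (enum_val r).
exists (b *m pinvmx W^T) => i fi; have iA : i \in A by rewrite inE fi.
by rewrite (dotvW _ _ iA) mulmxKpV ?submx_full // mxE enum_rankK_in.
Qed.

(* By stability the normals of the hyperplanes through [x] are independent, so
   some direction [u] leaves each of them on the prescribed side. *)
Lemma strict_sign_pattern x (e : 'I_n -> R) : X x -> (forall i, e i != 0) ->
  (forall i, 0 <= e i * hp_fun (H i) x) ->
  exists2 x', X x' & forall i, 0 < e i * hp_fun (H i) x'.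
Proof.
move=> Xx e_neq0 e_ge0; have [u u_active] := active_normals_solvable e Xx.
have /nbhs_ballP[r r_gt0 ballX] := stHX.1.1 x Xx.
pose NA := [set i | hp_fun (H i) x != 0].
have a_gt0 i : i \in NA -> 0 < e i * hp_fun (H i) x.
  by rewrite inE => fi; rewrite lt0r mulf_neq0 ?e_neq0 ?e_ge0.
have [e1 [e1_gt0 _ e1_small]] :=
  exists_small_pos a_gt0 (fun i _ => normr_ge0 (e i * dotv (hp_w (H i)) u)).
pose eps := Num.min e1 (r / (`|u| + 1)).
have r_u_gt0 : 0 < r / (`|u| + 1) by rewrite divr_gt0 // ltr_pwDr.
have eps_gt0 : 0 < eps by rewrite lt_min e1_gt0.
have eps_le_e1 : eps <= e1 by rewrite ge_min lexx.
have eps_le_r : eps <= r / (`|u| + 1) by rewrite ge_min lexx orbT.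
exists (x + eps *: u).
  apply: ballX; rewrite mx_norm_ball /ball_ /= opprD addrA subrr add0r normrN normrZ gtr0_norm //.
  rewrite ler_pdivlMr ?ltr_pwDr // in eps_le_r.
  have := normr_ge0 u; nra.
move=> i; rewrite hp_fun_shift mulrDr mulrCA.
have [fi|fi] := eqVneq (hp_fun (H i) x) 0.
  by rewrite fi mulr0 add0r u_active // pmulr_rgt0 // -expr2 exprn_even_gt0 ?e_neq0.
have := e1_small i; rewrite inE fi => /(_ isT).
have := a_gt0 i; rewrite inE fi => /(_ isT).
have := ler_norm (- (e i * dotv (hp_w (H i)) u)); rewrite normrN.
have := normr_ge0 (e i * dotv (hp_w (H i)) u); nra.
Qed.

End StablePerturbation.

Section FlippedCode.
Variables (R : realType) (d n : nat) (H : 'I_n -> hyperplane R d) (X : set 'rV[R]_d).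
Variables (C : {set {set 'I_n}}) (g : {set 'I_n}).
Hypotheses (stHX : stable_pair H X) (codeC : is_code_of H X C).
Implicit Types (x y : 'rV[R]_d) (i : 'I_n) (P s tau : {set 'I_n}).

Definition codeword x := [set i | 0 < hp_fun (H i) x].

Definition flipped_fun i x := (-1) ^+ (i \in g) * hp_fun (H i) x.

(* [x] lies on the positive side of the flipped [H i] exactly for [i \in P]. *)
Definition in_cell P x := forall i, 0 < (-1) ^+ (i \notin P) * flipped_fun i x.

Definition in_closed_cell P x := forall i, 0 <= (-1) ^+ (i \notin P) * flipped_fun i x.

Lemma mem_code s : s \in C <-> exists2 x, X x & s = codeword x.
Proof.
rewrite codeC; split => [[x [Xx [pos neg]]]|[x Xx ->]].
  exists x => //; apply/setP => i; rewrite inE.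
  by case: (boolP (i \in s)) => [/pos|/neg/negP/negbTE].
by exists x; split => //; split => i; rewrite inE // => /negP.
Qed.

Lemma mem_flip_code s : s \in flip_code g C <-> exists2 x, X x & s = flip g (codeword x).
Proof.
split => [/imsetP[_ /mem_code[x Xx ->] ->]|[x Xx ->]]; first by exists x.
by apply/imsetP; exists (codeword x) => //; apply/mem_code; exists x.
Qed.

Lemma in_closed_cell_flip x : in_closed_cell (flip g (codeword x)) x.
Proof.
move=> i; rewrite /flipped_fun /flip !inE.
by case: (i \in g); case: ltrP => f /=; rewrite ?expr0 ?expr1 ?mul1r ?mulN1r ?opprK; lra.
Qed.

Lemma flipped_pos_mem x i : 0 < flipped_fun i x -> i \in flip g (codeword x).
Proof.
move=> Gi; apply: contraLR (in_closed_cell_flip x i) => /negPf->.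
by rewrite -ltNge expr1 mulN1r oppr_lt0.
Qed.

Lemma in_cell_flip P x : in_cell P x -> flip g (codeword x) = P.
Proof.
move=> cellP; apply/setP => i; have := in_closed_cell_flip x i; have := cellP i.
by case: (i \in P); case: (i \in _); rewrite ?expr0 ?expr1 ?mul1r ?mulN1r //=; lra.
Qed.

Lemma exists_in_cell P x : X x -> in_closed_cell P x -> exists2 x', X x' & in_cell P x'.
Proof.
move=> Xx cellP; pose e i : R := (-1) ^+ (i \notin P) * (-1) ^+ (i \in g).
have [||x' Xx' strict] := strict_sign_pattern stHX (e := e) Xx.
- by move=> i; rewrite mulf_neq0 ?signr_eq0.
- by move=> i; rewrite -mulrA cellP.
by exists x' => // i; rewrite mulrA strict.
Qed.

Lemma flipped_fun_affine i : affine (flipped_fun i).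
Proof. by move=> x y t; rewrite /flipped_fun hp_fun_affine; ring. Qed.

Definition pos_region tau :=
  (X `&` [set x | forall i, i \in tau -> 0 < flipped_fun i x])%classic.

Lemma pos_region_convex tau : convex (pos_region tau).
Proof.
apply: convexI; first exact: stHX.1.2.
move=> x y t Px Py t0 t1 i it.
exact: convex_pos flipped_fun_affine i _ _ _ (Px i it) (Py i it) t0 t1.
Qed.

Lemma link_flip_code_nerve tau :
  link tau (Delta (flip_code g C)) = nerve flipped_fun (pos_region tau) (~: tau).
Proof.
apply/setP => v; rewrite !inE; apply/idP/idP.
  case/and3P => _ dis /existsP[s /andP[/mem_flip_code[x Xx ->] vts]].
  have [x' Xx' cell] := exists_in_cell Xx (in_closed_cell_flip x).
  have pos i : i \in v :|: tau -> 0 < flipped_fun i x'.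
    by move=> /(subsetP vts) ifl; have := cell i; rewrite ifl expr0 mul1r.
  rewrite -disjoints_subset dis; apply/asboolP; exists x'.
    by split => // i it; apply: pos; rewrite inE it orbT.
  by move=> i iv; apply: pos; rewrite inE iv.
case/andP => vt /asboolP[y [Xy pos_tau] pos_v].
have sC : flip g (codeword y) \in flip_code g C by apply/mem_flip_code; exists y.
have vts : v :|: tau \subset flip g (codeword y).
  by apply/subsetP => i /setUP[/pos_v|/pos_tau] /flipped_pos_mem.
rewrite disjoints_subset vt /=; apply/andP; split; apply/existsP;
  exists (flip g (codeword y)); rewrite sC //=.
exact: subset_trans (subsetUl _ _) vts.
Qed.

Lemma pos_region_covers tau :
  tau \notin flip_code g C -> covers flipped_fun (~: tau) (pos_region tau).
Proof.
move=> tauN y [Xy pos_tau]; apply: contrapT => nocov; apply/negP: tauN; apply/negPn.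
have closed_tau : in_closed_cell tau y.
  move=> i; case: (boolP (i \in tau)) => it /=; first by rewrite expr0 mul1r ltW ?pos_tau.
  rewrite expr1 mulN1r oppr_ge0 leNgt; apply/negP => Gi.
  by apply: nocov; exists i; rewrite ?inE.
have [y' Xy' cell] := exists_in_cell Xy closed_tau.
by apply/mem_flip_code; exists y' => //; rewrite (in_cell_flip cell).
Qed.

End FlippedCode.

Theorem theoremA (n : nat) (C : {set {set 'I_n}}) :
  stable_hyperplane_code C ->
  ~ exists (g tau : {set 'I_n}),
      tau \notin flip_code g C /\ ~ collapsible (link tau (Delta (flip_code g C))).
Proof.
case=> d [H [X [stHX codeC]]] [g [tau [tauN]]]; apply.
rewrite (link_flip_code_nerve g stHX codeC).
apply: (nerve_collapsible (flipped_fun_affine H g)).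
  exact: pos_region_convex.
exact: pos_region_covers.
Qed.
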